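(* Let $P=[0,1]$, let $r$ be a positive integer, let $\sigma_r=\sum_{i=r+1}^{2r+1}\frac1i$, and let $Q=\{q_1,\dots,q_r\}$ with $q_i=\frac{1}{\sigma_r}\sum_{j=r+1}^{r+i}\frac1j$ for $i\in[r]$ (so the $r+1$ intervals cut from $[0,1]$ by $Q$ have lengths proportional to $\frac1{r+1}:\frac1{r+2}:\dots:\frac1{2r+1}$). Let $\tau$ be any ordering of $Q$. Consider the online algorithm that maintains a set $\hat Q$ of positions ever used, each labelled occupied or vacant (initially empty); when a point departs its position becomes vacant; when a point arrives, if some position in $\hat Q$ is vacant the point is put at an arbitrary vacant position (now occupied); otherwise, if $Q\not\subseteq\hat Q$ the point is put at the first position of $Q\setminus\hat Q$ according to $\tau$, and if $Q\subseteq\hat Q$ it is put at the midpoint of a largest interval into which $[0,1]$ is divided by $\hat Q$; in both latter cases the new position is added to $\hat Q$ as occupied. Then for every instance $S$ whose maximum number $m$ of simultaneously present points satisfies $m>r$, we have $OPT_A(S;P)\le 2\sigma_r\cdot\min_{t\le T}d_{min}(t;X)$, where $X$ is the algorithm's output.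
   Context: Distances are Euclidean; $\partial P=\{0,1\}$. An instance is a sequence $S=((s_1,d_1),\dots,(s_n,d_n))$ with $s_i<d_i$, $0=s_1\le\dots\le s_n$; point $i$ is present at time $t$ iff $s_i\le t\le d_i$; $T=\max_i d_i$; $m=\max_{t\le T}|\{i:s_i\le t\le d_i\}|$. For locations $X=(X_1,\dots,X_n)\in P^n$, $d_{min}(t;X)=\min\{dis(X_i,\partial P),dis(X_i,X_j)\}$ over present points $i\ne j$ at time $t$, and $OPT_A(S;P)=\max_X\min_{t\le T}d_{min}(t;X)$. The algorithm is online: it places each arriving point irrevocably without knowing future events; events are chosen by an adaptive adversary. *)

From HB Require Import structures.
From mathcomp Require Import all_boot all_order all_algebra all_fingroup.
From mathcomp Require Import boolp classical_sets reals ereal.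
Set Implicit Arguments. Unset Strict Implicit. Unset Printing Implicit Defensive.
Import Order.TTheory GRing.Theory Num.Theory.
Local Open Scope classical_set_scope.
Local Open Scope ring_scope.

Section Defs.
Variable R : realType.

Definition sigma (r : nat) : R := \sum_(r.+1 <= i < (2 * r + 1).+1) (i%:R)^-1.

Definition qpos (r i : nat) : R :=
  (sigma r)^-1 * \sum_(r.+1 <= j < (r + i).+1) (j%:R)^-1.

Definition Qpt (r : nat) (k : 'I_r) : R := qpos r k.+1.

(* An instance: n points, arrival times s, departure times d. *)
Definition instance (n : nat) (s d : 'I_n -> R) : Prop :=
  [/\ forall i, s i < d i,
      forall i : 'I_n, val i = 0%N -> s i = 0
    & forall i j : 'I_n, (i <= j)%N -> s i <= s j].

Definition present n (s d : 'I_n -> R) (i : 'I_n) (t : R) : bool :=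
  (s i <= t) && (t <= d i).

Definition horizon n (d : 'I_n -> R) : R := \big[Num.max/0]_(i < n) d i.

Definition load n (s d : 'I_n -> R) (t : R) : nat := #|[set i | present s d i t]|.

Definition dist_bd (x : R) : R := Num.min `|x - 0| `|x - 1|.

Definition dmin n (s d : 'I_n -> R) (X : 'I_n -> R) (t : R) : \bar R :=
  \big[Order.min/+oo%E]_(i | present s d i t)
     Order.min (dist_bd (X i))%:E
       (\big[Order.min/+oo%E]_(j | present s d j t && (j != i)) (`|X i - X j|)%:E).

Definition objective n (s d : 'I_n -> R) (X : 'I_n -> R) : \bar R :=
  ereal_inf [set dmin s d X t | t in [set t | t <= horizon d]].

Definition inP n (X : 'I_n -> R) : Prop := forall i, 0 <= X i <= 1.

Definition OPT_A n (s d : 'I_n -> R) : \bar R :=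
  ereal_sup [set objective s d X | X in [set X | inP X]].

(* ---- the online algorithm ---------------------------------------------
   Points arrive in index order (s nondecreasing, ties by index).  A point
   departing at time t is still present at t, so departures at time t are
   processed after the arrivals at time t.  When point i arrives:
   - Qhat (positions ever used) = { X j | j < i };
   - a position x is occupied iff x = X j for some j < i still present,
     i.e. with s i <= d j; it is vacant iff it is in Qhat and not occupied. *)
Definition used n (X : 'I_n -> R) (i : 'I_n) (x : R) : Prop :=
  exists j : 'I_n, (j < i)%N /\ X j = x.

Definition occupied n (s d X : 'I_n -> R) (i : 'I_n) (x : R) : Prop :=
  exists j : 'I_n, [/\ (j < i)%N, s i <= d j & X j = x].

Definition vacant n (s d X : 'I_n -> R) (i : 'I_n) (x : R) : Prop :=
  used X i x /\ ~ occupied s d X i x.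

Definition gap n (X : 'I_n -> R) (i : 'I_n) (a b : R) : Prop :=
  [/\ a = 0 \/ used X i a, b = 1 \/ used X i b, a < b
    & forall j : 'I_n, (j < i)%N -> ~ (a < X j < b)].

Definition alg_step (r : nat) (tau : 'S_r) n (s d X : 'I_n -> R) (i : 'I_n) : Prop :=
  ((exists x, vacant s d X i x) /\ vacant s d X i (X i))
  \/
  ((~ exists x, vacant s d X i x) /\ (exists k : 'I_r, ~ used X i (Qpt k)) /\
   exists k : 'I_r, [/\ X i = Qpt (tau k), ~ used X i (Qpt (tau k))
                      & forall k' : 'I_r, (k' < k)%N -> used X i (Qpt (tau k'))])
  \/
  ((~ exists x, vacant s d X i x) /\ (forall k : 'I_r, used X i (Qpt k)) /\
   exists a b, [/\ gap X i a b,
                  forall a' b', gap X i a' b' -> b' - a' <= b - a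
                & X i = (a + b) / 2]).

Definition alg_output (r : nat) (tau : 'S_r) n (s d X : 'I_n -> R) : Prop :=
  forall i : 'I_n, alg_step tau s d X i.

End Defs.

(* If L + 1 points are present at some time, then in any placement two of
   them, or one of them and the boundary, are within 1 / (L + 2); this bounds
   OPT_A.

   Before Q is used up the algorithm only uses positions of Q, so, as more
   than r points are present at some time, Q does get used up.  From then on
   each gap between consecutive used positions is obtained from one of the
   r + 1 intervals cut by Q -- the one with label j has length 1 / (sigma j),
   r < j <= 2r + 1 -- by halving it some e times.  As a midpoint always goes
   into a largest gap g, every gap has length in [g / 2, g], so the objective
   is at least g / 2.  A midpoint is only created when every used position is
   occupied, so the number N of gaps is at most the load plus one at that
   time, and OPT_A <= 1 / N.  Finally, the gaps with label j number at least
   2^c_j, the least power of two with 2^c_j j >= 1 / (sigma g), and these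
   powers of two sum to at least 1 / (sigma g).  Hence
   OPT_A <= sigma g <= 2 sigma objective. *)

From Pilot Require Import Defs.
From HB Require Import structures.
From mathcomp Require Import all_boot all_order all_algebra all_fingroup.
From mathcomp Require Import boolp classical_sets reals ereal.
From mathcomp Require Import ring lra zify.
Import Order.TTheory GRing.Theory Num.Theory.
Local Open Scope ring_scope.

Set Implicit Arguments.
Unset Strict Implicit.

Section DyadicCounting.
Variable R : realType.

Lemma le_sum_doubled_below (M : R) (a k : nat) :
  k%:R + Num.min M (a + k)%:R <=
  \sum_(a <= j < a + k) (if j%:R < M then 2 else 1 : R) + a%:R.
Proof.
elim: k => [|k IH].
  by rewrite addn0 big_geq // !add0r ge_min lexx orbT.
rewrite addnS big_nat_recr /= ?leq_addr //.
rewrite -(addn1 k) -(addn1 (a + k)) !natrD -(natrD _ a k).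
have [jM|Mj] := ltP (a + k)%:R M.
- rewrite (_ : Num.min M (a + k)%:R = (a + k)%:R) in IH; last by apply/min_idPr; exact: ltW.
  have : Num.min M ((a + k)%:R + 1) <= (a + k)%:R + 1 by rewrite ge_min lexx orbT.
  by lra.
- rewrite (_ : Num.min M (a + k)%:R = M) in IH; last by apply/min_idPl.
  have -> : Num.min M ((a + k)%:R + 1) = M by apply/min_idPl; lra.
  by lra.
Qed.

Lemma le_sum_pow2_of_zero (M : R) (a j0 : nat) (c : nat -> nat) :
  (forall j, (a < j <= 2 * a + 1)%N -> M <= 2 ^+ c j * j%:R) ->
  (a < j0 <= 2 * a + 1)%N -> c j0 = 0%N ->
  M <= \sum_(a.+1 <= j < (2 * a + 1).+1) 2 ^+ c j.
Proof.
move=> hM hj0 c0.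
have M_small : M <= (2 * a + 1)%:R.
  by apply: (le_trans (hM j0 hj0)); rewrite c0 expr0 mul1r ler_nat; lia.
have := le_sum_doubled_below M a.+1 a.+1.
have -> : (a.+1 + a.+1 = (2 * a + 1).+1)%N by lia.
have -> : Num.min M (2 * a + 1).+1%:R = M.
  by apply/min_idPl; apply: (le_trans M_small); rewrite ler_nat.
suff : \sum_(a.+1 <= j < (2 * a + 1).+1) (if j%:R < M then 2 else 1 : R) <=
       \sum_(a.+1 <= j < (2 * a + 1).+1) 2 ^+ c j by lra.
rewrite !big_nat; apply: ler_sum => j hj.
case: ifP => [jM|_]; last by apply: exprn_ege1; lra.
case cj : (c j) => [|e].
  by have := hM j ltac:(lia); rewrite cj expr0 mul1r leNgt jM.
by rewrite exprS ler_peMr // exprn_ege1 // ler1n.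
Qed.

(* Needs the weights to be powers of two: [2 ^+ c j >= M / j] alone only
   bounds the sum below by [M * (sum_j 1 / j) < M].  The proof halves all
   weights until one of them is [1]. *)
Lemma le_sum_pow2 (M : R) (a : nat) (c : nat -> nat) :
  (forall j, (a < j <= 2 * a + 1)%N -> M <= 2 ^+ c j * j%:R) ->
  M <= \sum_(a.+1 <= j < (2 * a + 1).+1) 2 ^+ c j.
Proof.
have [N cN] : exists N, forall j, (a < j <= 2 * a + 1)%N -> (c j <= N)%N.
  exists (\max_(j < (2 * a + 1).+1) c j) => j /andP[_ hj].
  by rewrite -ltnS in hj; exact: (@leq_bigmax _ (fun j : 'I__ => c j) (Ordinal hj)).
elim: N M c cN => [|N IH] M c cN hM.
  by apply: (le_sum_pow2_of_zero hM (j0 := a.+1)); [lia | apply/eqP; rewrite -leqn0 cN //; lia].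
have [[j0 hj0 c0]|c_pos] := pselect (exists2 j, (a < j <= 2 * a + 1)%N & c j = 0%N).
  exact: le_sum_pow2_of_zero hM hj0 c0.
have c_halve j : (a < j <= 2 * a + 1)%N -> (2 : R) ^+ c j = 2 * 2 ^+ (c j).-1.
  move=> hj; rewrite -exprS prednK // lt0n; apply/eqP => cj0.
  by apply: c_pos; exists j.
rewrite big_nat (eq_bigr _ (fun j hj => c_halve j hj)) -mulr_sumr -big_nat.
suff : M / 2 <= \sum_(a.+1 <= j < (2 * a + 1).+1) 2 ^+ (c j).-1 by lra.
apply: IH => j hj; first by have := cN j hj; lia.
by have := hM j hj; rewrite c_halve //; lra.
Qed.

Lemma le_size_dyadic (T : eqType) (ps : seq T) (J E : T -> nat) (a : nat) (M : R) :
  (forall p, p \in ps -> (a < J p <= 2 * a + 1)%N) ->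
  (forall j, (a < j <= 2 * a + 1)%N ->
     \sum_(p <- ps | J p == j) (2 ^+ E p)^-1 = 1 :> R) ->
  (forall p, p \in ps -> M <= 2 ^+ E p * (J p)%:R) ->
  M <= (size ps)%:R.
Proof.
move=> hJ hsum hM.
have /choice[c hc] : forall j, exists k : nat, (a < j <= 2 * a + 1)%N ->
    M <= 2 ^+ k * j%:R /\ forall p, p \in ps -> J p = j -> (k <= E p)%N.
  move=> j.
  have [hj|] := boolP (a < j <= 2 * a + 1)%N; last by exists 0%N.
  have [p [hp Jp]] : exists p, p \in ps /\ J p = j.
    apply/not_existsP => none; have := hsum j hj.
    rewrite big_seq_cond big_pred0 => [/esym/eqP|p]; first by rewrite oner_eq0.
    by apply/negP => /andP[hp /eqP Jp]; apply: (none p).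
  have ex : exists k, M <= 2 ^+ k * j%:R by exists (E p); rewrite -Jp hM.
  case: (ex_minnP ex) => k hk kmin; exists k => _; split => // q hq Jq.
  by apply: kmin; rewrite -Jq hM.
apply: (le_trans (le_sum_pow2 (fun j hj => (hc j hj).1))).
have -> : (size ps)%:R = \sum_(a.+1 <= j < (2 * a + 1).+1)
                          \sum_(p <- ps | J p == j) (1 : R).
  under eq_bigr do rewrite big_mkcond.
  rewrite exchange_big /= -sum1_size natr_sum big_seq [RHS]big_seq.
  apply: eq_bigr => p hp; rewrite -big_mkcond (eq_bigl (fun j => j == J p)) => [|j].
    by rewrite big_nat1_eq ifT //; have := hJ p hp; lia.
  by rewrite eq_sym.
rewrite !big_nat; apply: ler_sum => j hj.
have hj' : (a < j <= 2 * a + 1)%N by lia.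
apply: (le_trans (y := \sum_(p <- ps | J p == j) 2 ^+ c j / 2 ^+ E p)).
  by rewrite -mulr_sumr hsum ?mulr1.
rewrite big_seq_cond [X in _ <= X]big_seq_cond; apply: ler_sum => p /andP[hp /eqP Jp].
rewrite ler_pdivrMr ?exprn_gt0 // mul1r ler_eXn2l //; last by lra.
exact: (hc j hj').2.
Qed.

End DyadicCounting.

Section Gaps.
Variable R : realType.
Implicit Types (P : R -> Prop) (a b x y z : R).

Definition is_gap P a b : Prop :=
  [/\ a = 0 \/ P a, b = 1 \/ P b, a < b & forall x, P x -> ~ a < x < b].

Definition in01 P : Prop := forall x, P x -> 0 < x < 1.

Lemma is_gap_bounds P a b : in01 P -> is_gap P a b -> 0 <= a /\ b <= 1.
Proof.
move=> h01 [ha hb _ _]; split.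
- by case: ha => [->//|/h01/andP[/ltW]].
- by case: hb => [->//|/h01/andP[_ /ltW]].
Qed.

Lemma is_gap_right_unique P a b b' : in01 P ->
  is_gap P a b -> is_gap P a b' -> b = b'.
Proof.
move=> h01 g g'; have [_ b1] := is_gap_bounds h01 g.
have [_ b'1] := is_gap_bounds h01 g'.
case: g g' => _ ob ab nb [_ ob' ab' nb'].
case: (ltgtP b b') => // lt_bb'.
- case: ob => [b_eq1|Pb]; first lra.
  by case: (nb' b Pb); rewrite ab lt_bb'.
- case: ob' => [b'_eq1|Pb']; first lra.
  by case: (nb b' Pb'); rewrite ab' lt_bb'.
Qed.

Lemma is_gap_left_unique P a a' b : in01 P ->
  is_gap P a b -> is_gap P a' b -> a = a'.
Proof.
move=> h01 g g'; have [a0 _] := is_gap_bounds h01 g.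
have [a'0 _] := is_gap_bounds h01 g'.
case: g g' => oa _ ab na [oa' _ ab' na'].
case: (ltgtP a a') => // lt_aa'.
- case: oa' => [a'_eq0|Pa']; first lra.
  by case: (na a' Pa'); rewrite lt_aa' ab'.
- case: oa => [a_eq0|Pa]; first lra.
  by case: (na' a Pa); rewrite lt_aa' ab.
Qed.

Lemma is_gap_overlap P a b x y z : in01 P -> is_gap P a b -> is_gap P x y ->
  a < z < b -> x < z < y -> (a, b) = (x, y).
Proof.
move=> h01 gab gxy /andP[az zb] /andP[xz zy].
have [a0 _] := is_gap_bounds h01 gab; have [x0 _] := is_gap_bounds h01 gxy.
have ax : a = x.
  case: gab gxy => oa _ _ na [ox _ _ nx].
  case: (ltgtP a x) => // lt_ax.
  - case: ox => [x_eq0|Px]; first lra.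
    by case: (na x Px); apply/andP; split; lra.
  - case: oa => [a_eq0|Pa]; first lra.
    by case: (nx a Pa); apply/andP; split; lra.
by move: gxy; rewrite -ax => /(is_gap_right_unique h01 gab) ->.
Qed.

Section Midpoint.
Variables (P : R -> Prop) (a b : R).
Hypotheses (h01 : in01 P) (gab : is_gap P a b).
Local Notation m := ((a + b) / 2).
Local Notation Pm := (fun w => P w \/ w = m).

Lemma mid_in_gap : a < m < b /\ ~ P m.
Proof.
have [_ _ ab nab] := gab.
have amb : a < m < b by apply/andP; split; lra.
by split => // Pm; apply: (nab m).
Qed.

Lemma in01_add_mid : in01 Pm.
Proof.
have [a0 b1] := is_gap_bounds h01 gab; have [/andP[am mb] _] := mid_in_gap.
by move=> x [/h01 //|->]; apply/andP; split; lra.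
Qed.

Lemma is_gap_add_mid_left : is_gap Pm a m.
Proof.
have [oa _ _ nab] := gab; have [/andP[am mb] _] := mid_in_gap.
split => //; first by case: oa; [left | right; left].
- by right; right.
- move=> w [Pw|->]; last by rewrite ltxx andbF.
  by move=> /andP[aw wm]; apply: (nab w Pw); apply/andP; split; lra.
Qed.

Lemma is_gap_add_mid_right : is_gap Pm m b.
Proof.
have [_ ob _ nab] := gab; have [/andP[am mb] _] := mid_in_gap.
split => //; first by right; right.
- by case: ob; [left | right; left].
- move=> w [Pw|->]; last by rewrite ltxx.
  by move=> /andP[mw wb]; apply: (nab w Pw); apply/andP; split; lra.
Qed.

Lemma is_gap_add_mid x y : is_gap P x y -> (x, y) <> (a, b) -> is_gap Pm x y.
Proof.
move=> gxy ne; have [ox oy xy nxy] := gxy; have [amb _] := mid_in_gap.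
split => //; first by case: ox; [left | right; left].
- by case: oy; [left | right; left].
- move=> w [Pw|-> xmy]; first exact: nxy.
  by apply: ne; symmetry; apply: (is_gap_overlap h01 gab gxy amb).
Qed.

Lemma is_gap_add_midP x y : is_gap Pm x y <->
  (is_gap P x y /\ (x, y) <> (a, b)) \/ (x, y) = (a, m) \/ (x, y) = (m, b).
Proof.
have h01m := in01_add_mid.
split; last first.
  case=> [[gxy ne]|[[-> ->]|[-> ->]]].
  - exact: is_gap_add_mid.
  - exact: is_gap_add_mid_left.
  - exact: is_gap_add_mid_right.
move=> gxy; have [ox oy xy nxy] := gxy.
have [xm|xm] := eqVneq x m.
  right; right; rewrite xm in gxy *.
  by rewrite (is_gap_right_unique h01m gxy is_gap_add_mid_right).
have [ym|ym] := eqVneq y m.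
  right; left; rewrite ym in gxy *.
  by rewrite (is_gap_left_unique h01m gxy is_gap_add_mid_left).
left; split.
- split => //; first by case: ox => [|[|/eqP]]; [left | right | rewrite (negbTE xm)].
  + by case: oy => [|[|/eqP]]; [left | right | rewrite (negbTE ym)].
  + by move=> w Pw; apply: nxy; left.
- case=> ex ey; have [amb _] := mid_in_gap.
  by apply: (nxy m); [right | rewrite ex ey].
Qed.

End Midpoint.
End Gaps.

Section HarmonicPartition.
Variables (R : realType) (r : nat).
Local Notation sigma := (sigma R r).
Local Notation qpos := (qpos R r).

Lemma sigma_gt0 : 0 < sigma.
Proof.
rewrite /Defs.sigma big_ltn; last lia.
apply: ltr_wpDr; first by apply: sumr_ge0 => i _; rewrite invr_ge0.
by rewrite invr_gt0 ltr0n.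
Qed.

(* The [Q]-interval with label [j] has length [1 / (sigma j)]; a piece of
   depth [e] is obtained from it by [e] halvings. *)
Definition piece_len (j e : nat) : R := (2 ^+ e * (sigma * j%:R))^-1.

Lemma piece_len_gt0 j e : (0 < j)%N -> 0 < piece_len j e.
Proof.
by move=> j0; rewrite invr_gt0 !mulr_gt0 ?exprn_gt0 ?sigma_gt0 ?ltr0n.
Qed.

Lemma piece_lenS j e : piece_len j e.+1 = piece_len j e / 2.
Proof. by rewrite /piece_len exprS -mulrA invfM mulrC. Qed.

Lemma piece_len0_le_double j1 j2 :
  (r < j1 <= 2 * r + 1)%N -> (r < j2 <= 2 * r + 1)%N ->
  piece_len j1 0 <= 2 * piece_len j2 0.
Proof.
move=> h1 h2; rewrite /piece_len !expr0 !mul1r.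
have s0 := sigma_gt0.
have j1_gt0 : (0 : R) < j1%:R by rewrite ltr0n; lia.
have j2_gt0 : (0 : R) < j2%:R by rewrite ltr0n; lia.
rewrite -div1r ler_pdivrMr ?mulr_gt0 //.
have -> : 2 * (sigma * j2%:R)^-1 * (sigma * j1%:R) = 2 * j1%:R / j2%:R.
  by field; rewrite !gt_eqF.
by rewrite ler_pdivlMr // mul1r -natrM ler_nat; lia.
Qed.

Lemma piece_len_le (j e : nat) (g : R) : (0 < j)%N ->
  piece_len j e <= g -> (sigma * g)^-1 <= 2 ^+ e * j%:R.
Proof.
move=> j0 le_g; have len_gt0 := piece_len_gt0 e j0.
have g_gt0 : 0 < g by lra.
move: le_g; rewrite /piece_len -div1r ler_pdivrMr ?mulr_gt0 ?exprn_gt0 ?sigma_gt0 ?ltr0n //.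
rewrite -div1r ler_pdivrMr ?mulr_gt0 ?sigma_gt0 //.
by rewrite (_ : 2 ^+ e * j%:R * (sigma * g) = g * (2 ^+ e * (sigma * j%:R))) //; ring.
Qed.

Lemma qpos0 : qpos 0 = 0.
Proof. by rewrite /Defs.qpos addn0 big_geq // mulr0. Qed.

Lemma qposS m : qpos m.+1 = qpos m + piece_len (r + m).+1 0.
Proof.
rewrite /Defs.qpos /piece_len addnS big_nat_recr /= ?ltnS ?leq_addr //.
by rewrite mulrDr expr0 mul1r invfM.
Qed.

Lemma qpos_last : qpos r.+1 = 1.
Proof.
rewrite /Defs.qpos (_ : (r + r.+1 = 2 * r + 1)%N); last lia.
by rewrite mulVf // gt_eqF // sigma_gt0.
Qed.

Lemma qpos_ltE i j : (qpos i < qpos j) = (i < j)%N.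
Proof.
have qpos_lt : {homo qpos : i j / (i < j)%N >-> i < j}.
  apply: homo_ltn => [y x z|i']; first exact: lt_trans.
  by rewrite qposS ltrDl piece_len_gt0.
case: ltnP => [/qpos_lt //|]; rewrite leq_eqVlt => /orP[/eqP->|/qpos_lt/ltW le_ji].
  by rewrite ltxx.
by rewrite ltNge le_ji.
Qed.

Lemma Qpt_in01 (q : 'I_r) : 0 < Qpt R q < 1.
Proof. by rewrite /Qpt -qpos0 -qpos_last !qpos_ltE /= ltnS ltn_ord. Qed.

Definition Qset (x : R) : Prop := exists q : 'I_r, x = Qpt R q.

Lemma QsetE x : Qset x <-> exists2 m, (0 < m <= r)%N & x = qpos m.
Proof.
split=> [[q ->]|[m /andP[m0 mr] ->]]; first by exists q.+1 => //=; rewrite ltn_ord.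
have mr' : (m.-1 < r)%N by lia.
by exists (Ordinal mr'); rewrite /Qpt /= prednK.
Qed.

Definition Q_gap (m : nat) : R * R := (qpos m, qpos m.+1).

Definition Q_gaps : seq (R * R) := mkseq Q_gap r.+1.

Lemma Q_gap_inj : injective Q_gap.
Proof.
move=> m1 m2 [eq_q _]; case: (ltngtP m1 m2) => // lt_m;
  by move: lt_m; rewrite -qpos_ltE eq_q ltxx.
Qed.

Lemma uniq_Q_gaps : uniq Q_gaps.
Proof. exact: mkseq_uniq Q_gap_inj. Qed.

Lemma index_Q_gap m : (m < r.+1)%N -> index (Q_gap m) Q_gaps = m.
Proof.
by move=> hm; rewrite -(nth_mkseq (Q_gap 0) Q_gap hm) index_uniq ?size_mkseq ?uniq_Q_gaps.
Qed.

Lemma mem_Q_gaps p : p \in Q_gaps <-> exists2 m, (m < r.+1)%N & p = Q_gap m.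
Proof.
split=> [/mapP[m]|[m hm ->]]; last by apply: map_f; rewrite mem_iota.
by rewrite mem_iota add0n => hm ->; exists m.
Qed.

Lemma is_gap_QsetP a b : is_gap Qset a b <-> (a, b) \in Q_gaps.
Proof.
rewrite mem_Q_gaps.
have leftE x : x = 0 \/ Qset x <-> exists2 m, (m <= r)%N & x = qpos m.
  rewrite QsetE; split=> [[->|[m hm ->]]|[[|m] hm ->]].
  - by exists 0%N; rewrite ?qpos0.
  - by exists m => //; lia.
  - by left; rewrite qpos0.
  - by right; exists m.+1.
have rightE y : y = 1 \/ Qset y <-> exists2 m, (0 < m <= r.+1)%N & y = qpos m.
  rewrite QsetE; split=> [[->|[m hm ->]]|[m hm ->]].
  - by exists r.+1; rewrite ?qpos_last ?leqnn.
  - by exists m => //; lia.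
  - have [mr|mr] := boolP (m <= r)%N; first by right; exists m => //; lia.
    by rewrite (_ : m = r.+1) ?qpos_last; [left | lia].
split=> [[/leftE[m1 hm1 ->] /rightE[m2 hm2 ->] lt12 nint]|[m hm [-> ->]]].
  rewrite qpos_ltE in lt12; exists m1; first lia.
  have [->//|ne] := eqVneq m2 m1.+1; case: (nint (qpos m1.+1)).
    by apply/QsetE; exists m1.+1 => //; lia.
  by rewrite !qpos_ltE; lia.
split; [apply/leftE; exists m => //; lia | apply/rightE; exists m.+1 => //; lia | |].
- by rewrite qpos_ltE.
- by move=> w /QsetE[m' _ ->]; rewrite !qpos_ltE; lia.
Qed.


End HarmonicPartition.

Section Packing.
Variable R : realType.

Lemma exists_far_point (T : finType) (A : {set T}) (Y : T -> R) (D : R) (m : nat) :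
  #|A| = m.+1 -> (forall i, i \in A -> D < Y i) ->
  (forall i j, i \in A -> j \in A -> i != j -> D < `|Y i - Y j|) ->
  exists2 i, i \in A & m.+1%:R * D < Y i.
Proof.
elim: m A => [|m IH] A cardA far sep; have /card_gt0P[i iA] : (0 < #|A|)%N by rewrite cardA.
  by exists i; rewrite ?mul1r ?far.
have [i0 i0A i0max] := eq_bigmax (x := D) i (fun j => j \in A) Y iA (fun j jA => ltW (far j jA)).
have le_i0 j : j \in A -> Y j <= Y i0 by rewrite -i0max => jA; exact: le_bigmax_cond.
have sub : A :\ i0 \subset A := subD1set A i0.
have card' : #|A :\ i0| = m.+1 by move: cardA; rewrite (cardsD1 i0) i0A => -[].
have [i1] := IH _ card' (fun j jA => far j (fintype.subsetP sub j jA))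
  (fun j k jA kA => sep j k (fintype.subsetP sub j jA) (fintype.subsetP sub k kA)).
rewrite !inE => /andP[ne i1A] far1; exists i0 => //.
have := sep i0 i1 i0A i1A; rewrite eq_sym ne ger0_norm ?subr_ge0 ?le_i0 // => /(_ isT).
by rewrite -(natr1 m.+1) mulrDl mul1r; lra.
Qed.

Variables (n : nat) (s d : 'I_n -> R).

Lemma d_le_horizon i : d i <= horizon d.
Proof. exact: le_bigmax_cond. Qed.

Lemma loadE t : load s d t = #|[set j : 'I_n | present s d j t]%SET|.
Proof. by apply: eq_card => j; rewrite inE; apply/idP/idP; rewrite ?in_setE. Qed.

Lemma dmin_gtP (Y : 'I_n -> R) (t D : R) : (forall i, 0 <= Y i <= 1) ->
  (D%:E < dmin s d Y t)%E ->
  (forall i, present s d i t -> D < Y i /\ D < 1 - Y i) /\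
  (forall i j, present s d i t -> present s d j t -> i != j -> D < `|Y i - Y j|).
Proof.
move=> Y01 /bigmin_gtP[_ far]; split=> [i pi|i j pi pj ne].
  move: (far i pi); rewrite lt_min lte_fin /dist_bd lt_min subr0 => /andP[/andP[D0 D1] _].
  have /andP[Y0 Y1] := Y01 i.
  by rewrite ger0_norm // in D0; rewrite ler0_norm ?subr_le0 // opprB in D1.
move: (far i pi); rewrite lt_min => /andP[_ /bigmin_gtP[_ /(_ j)]].
by rewrite pj eq_sym ne lte_fin => /(_ isT).
Qed.

Lemma OPT_A_le_inv_load t L : t <= horizon d -> load s d t = L.+1 ->
  (OPT_A s d <= (L.+2%:R^-1)%:E)%E.
Proof.
move=> le_t loadL; apply/ereal_supP => _ [Y Y01 <-].
apply: le_trans (_ : (_ <= dmin s d Y t)%E) _; first by apply: ereal_inf_lbound; exists t.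
rewrite leNgt; apply/negP => /(dmin_gtP Y01) [far sep].
pose A := [set j | present s d j t]%SET.
have cardA : #|A| = L.+1 by rewrite -loadE.
have farA i : i \in A -> L.+2%:R^-1 < Y i by rewrite inE => /far[].
have sepA i j : i \in A -> j \in A -> i != j -> L.+2%:R^-1 < `|Y i - Y j|.
  by rewrite !inE; exact: sep.
have [i] := exists_far_point cardA farA sepA.
rewrite inE => /far[_ far1].
have : L.+1%:R * L.+2%:R^-1 + L.+2%:R^-1 = 1 :> R.
  by rewrite -[X in _ + X]mul1r -mulrDl natr1 mulfV.
move: far1; set D := L.+2%:R^-1; move: (L.+1%:R * D) => c; lra.
Qed.

End Packing.

Section GapInvariant.
Variables (R : realType) (r n : nat) (s d X : 'I_n -> R).
Local Notation piece_len := (piece_len R r).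

Definition used_upto (k : nat) (x : R) : Prop := exists j : 'I_n, (j < k)%N /\ X j = x.

Lemma used_uptoS k (lt_kn : (k < n)%N) :
  used_upto k.+1 = (fun x => used_upto k x \/ x = X (Ordinal lt_kn)).
Proof.
apply/funext => x; apply/propext; split.
- move=> [j [+ <-]]; rewrite ltnS leq_eqVlt => /orP[/eqP j_eq|lt_jk].
    by right; congr X; exact: val_inj.
  by left; exists j.
- case=> [[j [hj <-]]|->]; last by exists (Ordinal lt_kn).
  by exists j; split => //; exact: ltnW.
Qed.

Lemma gapE (i : 'I_n) a b : gap X i a b <-> is_gap (used_upto i) a b.
Proof.
split; case=> oa ob ab nab; split => //.
- by move=> x [j [lt_ji <-]]; exact: nab.
- by move=> j lt_ji; apply: nab; exists j.
Qed.

Lemma exists_gap_from k x y : (x = 0 \/ used_upto k x) -> (y = 1 \/ used_upto k y) ->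
  x < y -> exists2 z, is_gap (used_upto k) x z & z <= y.
Proof.
move=> ox oy xy.
pose between := [pred j : 'I_n | (j < k)%N && (x < X j < y)].
case: (pickP between) => [j0 hj0|none].
- case: (arg_minP X hj0) => j /andP[lt_jk /andP[xj jy]] jmin.
  exists (X j); last exact: ltW.
  split => //; first by right; exists j.
  move=> w [j' [lt_j'k <-]] /andP[xj' j'j].
  have : between j' by rewrite /= lt_j'k xj' (lt_trans j'j jy).
  by move=> /jmin; rewrite leNgt j'j.
- exists y => //; split => // w [j [lt_jk <-]] xjy.
  by have := none j; rewrite /= lt_jk xjy.
Qed.

(* The gaps cut out by [P] are listed by [gs]; each gap [p] is the piece of
   depth [E p] of the [Q]-interval with label [J p]. *)
Record gap_invariant (P : R -> Prop) (gs : seq (R * R)) (J E : R * R -> nat) : Prop := {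
  gaps_uniq : uniq gs;
  gapsP : forall a b, is_gap P a b <-> (a, b) \in gs;
  gap_label : forall p, p \in gs -> (r < J p <= 2 * r + 1)%N;
  gap_len : forall p, p \in gs -> p.2 - p.1 = piece_len (J p) (E p);
  gap_dyadic : forall j, (r < j <= 2 * r + 1)%N ->
    \sum_(p <- gs | J p == j) (2 ^+ E p)^-1 = 1 :> R;
  gap_ratio : forall p q, p \in gs -> q \in gs -> p.2 - p.1 <= 2 * (q.2 - q.1);
  gaps_load : exists2 t, t <= horizon d & (size gs <= (load s d t).+1)%N }.

Lemma gap_invariant_Q : (exists2 t, t <= horizon d & (r < load s d t)%N) ->
  exists gs J E, gap_invariant (Qset r) gs J E.
Proof.
move=> [t le_t busy].
exists (Q_gaps R r), (fun p => index p (Q_gaps R r) + r.+1)%N, (fun=> 0%N); split.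
- exact: uniq_Q_gaps.
- exact: is_gap_QsetP.
- by move=> p /mem_Q_gaps[m hm ->]; rewrite index_Q_gap //; lia.
- move=> p /mem_Q_gaps[m hm ->]; rewrite index_Q_gap //= qposS addrAC subrr add0r.
  by congr piece_len; lia.
- move=> j hj; rewrite big_map big_mkcond -[iota 0 r.+1]/(index_iota 0 r.+1).
  rewrite (eq_big_seq (fun m => if m == (j - r.+1)%N then 1 else 0)) => [|m].
    by rewrite -big_mkcond big_nat1_eq ifT //; lia.
  rewrite mem_index_iota => hm; rewrite index_Q_gap // expr0 invr1.
  by congr (if _ then _ else _); apply/eqP/eqP; lia.
- move=> p q /mem_Q_gaps[m1 hm1 ->] /mem_Q_gaps[m2 hm2 ->] /=.
  rewrite !qposS !(addrAC _ _ (- _)) !subrr !add0r.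
  by apply: piece_len0_le_double; lia.
- by exists t => //; rewrite size_mkseq; lia.
Qed.

Section MidpointStep.
Variables (P : R -> Prop) (gs : seq (R * R)) (J E : R * R -> nat) (a b : R).
Hypotheses (h01 : in01 P) (inv : gap_invariant P gs J E) (gab : is_gap P a b).
Hypothesis largest : forall a' b', is_gap P a' b' -> b' - a' <= b - a.
Hypothesis size_le_load : exists2 t, t <= horizon d & (size gs <= load s d t)%N.
Local Notation m := ((a + b) / 2).

Let halves := [:: (a, m); (m, b)].
Let gs' := (a, m) :: (m, b) :: rem (a, b) gs.
Let J' p := if p \in halves then J (a, b) else J p.
Let E' p := if p \in halves then (E (a, b)).+1 else E p.

Let ab_in : (a, b) \in gs.
Proof. exact/(gapsP inv). Qed.

Let halves_notin p : p \in halves -> p \notin gs.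
Proof.
have [/andP[am mb] nPm] := mid_in_gap gab; have [_ b1] := is_gap_bounds h01 gab.
rewrite !inE => /orP[] /eqP -> ; apply/negP => /(gapsP inv) [oa ob _ _].
- by case: ob => [m1|//]; lra.
- by case: oa => [m0|//]; have := is_gap_bounds h01 gab; lra.
Qed.

Let mem_rest p : p \in rem (a, b) gs -> p \in gs /\ p \notin halves.
Proof.
move=> p_rest; have p_in := mem_rem p_rest; split => //.
by apply: contraL p_in; exact: halves_notin.
Qed.

Let mem_gs' p : (p \in gs') = (p \in halves) || (p \in rem (a, b) gs).
Proof. by rewrite !inE orbA. Qed.

Let rest_E p : p \in rem (a, b) gs -> J' p = J p /\ E' p = E p.
Proof. by move=> /mem_rest[_ /negbTE p_halves]; rewrite /J' /E' p_halves. Qed.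

Let halves_E p : p \in halves ->
  [/\ p.2 - p.1 = (b - a) / 2, J' p = J (a, b) & E' p = (E (a, b)).+1].
Proof.
move=> p_halves; rewrite /J' /E' p_halves; split => //.
by move: p_halves; rewrite !inE => /orP[] /eqP -> /=; field.
Qed.

Lemma gap_invariant_add_mid :
  exists gs' J' E', gap_invariant (fun w => P w \/ w = m) gs' J' E'.
Proof.
exists gs', J', E'.
have [uniq_gs gsP label len dyadic ratio _] := inv.
have [/andP[am mb] _] := mid_in_gap gab.
have len_ab : b - a = piece_len (J (a, b)) (E (a, b)) by exact: (len _ ab_in).
split.
- rewrite /gs' /= !inE negb_or rem_uniq // andbT.
  have [nin1 nin2] : (a, m) \notin gs /\ (m, b) \notin gs.
    by split; apply: halves_notin; rewrite !inE eqxx ?orbT.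
  rewrite (contra (@mem_rem _ _ _ _) nin1) (contra (@mem_rem _ _ _ _) nin2) !andbT.
  by apply/eqP => -[am_eq _]; lra.
- move=> x y; rewrite (is_gap_add_midP h01 gab) /gs' !inE (mem_rem_uniq _ uniq_gs) inE.
  split=> [[[/gsP gxy ne]|[->|->]]|]; rewrite ?eqxx ?orbT //.
    by rewrite gxy andbT; apply/orP; right; apply/orP; right; apply/eqP.
  case/orP=> [/eqP->|/orP[/eqP->|/andP[/eqP ne /gsP gxy]]]; by [right; left | right; right | left].
- move=> p; rewrite mem_gs' => /orP[/halves_E[_ -> _]|/[dup]/rest_E[-> _] /mem_rest[p_in _]].
    exact: label ab_in.
  exact: label.
- move=> p; rewrite mem_gs' => /orP[/halves_E[-> -> ->]|/[dup]/rest_E[-> ->] /mem_rest[p_in _]].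
    by rewrite piece_lenS -len_ab.
  exact: len.
- move=> j hj; rewrite /gs' !big_cons.
  have [_ -> ->] := halves_E (mem_head _ _).
  have [_ -> ->] := halves_E (mem_last _ [:: (m, b)]).
  rewrite -[RHS](dyadic j hj) (perm_big _ (perm_to_rem ab_in)) big_cons /=.
  have -> : \sum_(p <- rem (a, b) gs | J' p == j) (2 ^+ E' p)^-1 =
            \sum_(p <- rem (a, b) gs | J p == j) (2 ^+ E p)^-1 :> R.
    by rewrite big_mkcond [RHS]big_mkcond; apply: eq_big_seq => p /rest_E[-> ->].
  case: (J (a, b) == j) => //; rewrite addrA; congr (_ + _).
  by rewrite exprS invfM; field; exact: expf_neq0.
- have old_le p : p \in gs -> p.2 - p.1 <= b - a by case: p => x y /gsP /largest.
  have old_ge p : p \in gs -> b - a <= 2 * (p.2 - p.1) by exact: ratio ab_in.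
  move=> p q; rewrite !mem_gs'.
  case/orP=> [/halves_E[-> _ _]|/mem_rest[p_in _]]; case/orP=> [/halves_E[-> _ _]|/mem_rest[q_in _]].
  + lra.
  + by have := old_ge q q_in; lra.
  + by have := old_le p p_in; lra.
  + exact: ratio.
- have [t le_t size_le] := size_le_load; exists t => //.
  by rewrite /gs' /= size_rem // prednK //; case: (gs) ab_in.
Qed.

End MidpointStep.

Lemma gap_invariant_sep k gs J E (delta : R) :
  gap_invariant (used_upto k) gs J E ->
  (forall p, p \in gs -> delta <= p.2 - p.1) ->
  forall x y, (x = 0 \/ used_upto k x) -> (y = 1 \/ used_upto k y) -> x < y ->
  delta <= y - x.
Proof.
move=> inv long x y ox oy xy; have [z gxz zy] := exists_gap_from ox oy xy.
by have := long (x, z) ((gapsP inv x z).1 gxz); rewrite /=; lra.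
Qed.

Definition max_gap (gs : seq (R * R)) : R := \big[Num.max/0]_(p <- gs) (p.2 - p.1).

Lemma le_max_gap gs p : p \in gs -> p.2 - p.1 <= max_gap gs.
Proof. by move=> p_in; rewrite (le_bigmax_seq _ _ (fun=> true) (fun p : R * R => p.2 - p.1) p_in). Qed.

Section Counting.
Variables (P : R -> Prop) (gs : seq (R * R)) (J E : R * R -> nat).
Hypothesis inv : gap_invariant P gs J E.

Lemma gap_invariant_size_gt0 : (0 < size gs)%N.
Proof.
have label_r1 : (r < r.+1 <= 2 * r + 1)%N by lia.
have := gap_dyadic inv label_r1; case: (gs) => // /esym/eqP.
by rewrite big_nil oner_eq0.
Qed.

Lemma gap_len_gt0 p : p \in gs -> 0 < p.2 - p.1.
Proof.
by move=> p_in; rewrite (gap_len inv p_in) piece_len_gt0 //; have := gap_label inv p_in; lia.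
Qed.

Lemma max_gap_gt0 : 0 < max_gap gs.
Proof.
have [p0 p0_in] : exists p0, p0 \in gs.
  by move: gap_invariant_size_gt0; case: (gs) => // p0 ? _; exists p0; rewrite mem_head.
exact: lt_le_trans (gap_len_gt0 p0_in) (le_max_gap p0_in).
Qed.

Lemma max_gap_le_double p : p \in gs -> max_gap gs <= 2 * (p.2 - p.1).
Proof.
move=> p_in; rewrite /max_gap big_seq; apply: bigmax_le => [|q q_in /=].
  by have := gap_len_gt0 p_in; lra.
by have := gap_ratio inv q_in p_in.
Qed.

Lemma gap_invariant_size_ge : (sigma R r * max_gap gs)^-1 <= (size gs)%:R.
Proof.
apply: le_size_dyadic (gap_label inv) (gap_dyadic inv) _ => p p_in.
apply: piece_len_le; first by have := gap_label inv p_in; lia.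
by rewrite -(gap_len inv p_in) le_max_gap.
Qed.

Lemma OPT_A_le_inv_size : (exists2 t, t <= horizon d & (r < load s d t)%N) ->
  (OPT_A s d <= ((size gs)%:R^-1)%:E)%E.
Proof.
move=> [t0 le_t0 busy0]; have [t le_t size_le] := gaps_load inv.
have size_gt0 := gap_invariant_size_gt0.
have inv_le L : (size gs <= L.+2)%N -> L.+2%:R^-1 <= (size gs)%:R^-1 :> R.
  by move=> le_L; rewrite lef_pV2 ?posrE ?ltr0n ?ler_nat.
case load_t: (load s d t) size_le => [|L] size_le.
  have [L0 load_t0] : exists L0, load s d t0 = L0.+1 by exists (load s d t0).-1; lia.
  apply: le_trans (OPT_A_le_inv_load le_t0 load_t0) _.
  by rewrite lee_fin inv_le //; lia.
by apply: le_trans (OPT_A_le_inv_load le_t load_t) _; rewrite lee_fin inv_le.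
Qed.

End Counting.

End GapInvariant.

Section OnlineAlgorithm.
Variables (R : realType) (r n : nat) (tau : 'S_r) (s d X : 'I_n -> R).
Hypotheses (r_gt0 : (0 < r)%N) (inst : instance s d) (alg : alg_output tau s d X).
Hypothesis busy : exists2 t, t <= horizon d & (r < load s d t)%N.

Local Notation used_upto := (used_upto X).
Local Notation gap_invariant := (gap_invariant r s d).

(* All gaps but the one starting at [0] start at distinct occupied positions,
   and the arriving point [i] is present as well. *)
Lemma size_gaps_le_load (i : 'I_n) (gs : seq (R * R)) : in01 (used_upto i) ->
  (forall x, used_upto i x -> occupied s d X i x) -> uniq gs ->
  (forall p, p \in gs -> is_gap (used_upto i) p.1 p.2) ->
  (size gs <= load s d (s i))%N.
Proof.
move=> h01 all_occ uniq_gs gaps; have [s_lt_d _ s_mono] := inst.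
pose f (p : R * R) : option 'I_n :=
  if p.1 == 0 then None else [pick j : 'I_n | (j < i)%N && (s i <= d j) && (X j == p.1)].
have fP p : p \in gs -> (f p = None /\ p.1 = 0) \/
    exists j, f p = Some j /\ [/\ (j < i)%N, s i <= d j & X j = p.1].
  move=> p_in; rewrite /f; have [->|p1_neq0] := eqVneq p.1 0; first by left.
  right; case: pickP => [j /andP[/andP[lt_ji sd] /eqP Xj]|none]; first by exists j.
  have [[p1_eq0|used_p1] _ _ _] := gaps p p_in; first by rewrite p1_eq0 eqxx in p1_neq0.
  have [j [lt_ji sd Xj]] := all_occ _ used_p1.
  by have := none j; rewrite lt_ji sd Xj eqxx.
have f_inj : {in gs &, injective f}.
  move=> p q p_in q_in fpq.
  have left_eq : p.1 = q.1.
    case: (fP p p_in) (fP q q_in) => [[fp p0]|[j [fp [_ _ Xj]]]] [[fq q0]|[j' [fq [_ _ Xj']]]];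
      rewrite fp fq in fpq => //; first by rewrite p0 q0.
    by case: fpq Xj => -> <-.
  move: (gaps p p_in) (gaps q q_in); rewrite left_eq => gp gq.
  by case: p q {p_in q_in fpq} left_eq gp gq => [x y] [x' y'] /= -> gp gq;
    rewrite (is_gap_right_unique h01 gp gq).
pose A := [set j : 'I_n | (j < i)%N && present s d j (s i)].
have : (size gs <= (#|A|).+1)%N.
  have -> : (#|A|).+1 = size (None :: map Some (enum A)) by rewrite /= size_map cardE.
  rewrite -(size_map f).
  apply: uniq_leq_size; first by rewrite map_inj_in_uniq.
  move=> o /mapP[p p_in ->]; rewrite inE.
  case: (fP p p_in) => [[-> _]|[j [-> [lt_ji sd _]]]]; first by rewrite eqxx.
  by rewrite map_f // mem_enum inE lt_ji /present sd andbT s_mono // ltnW.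
have : (#|A| < load s d (s i))%N.
  rewrite loadE; apply: proper_card; apply/properP; split.
  - by apply/fintype.subsetP => j; rewrite !inE => /andP[].
  - by exists i; rewrite !inE ?ltnn // /present lexx ltW.
lia.
Qed.

Definition Q_used k : Prop := forall q : 'I_r, used_upto k (Qpt R q).

Definition alg_invariant k : Prop :=
  [/\ in01 (used_upto k),
      Q_used k -> exists gs J E, gap_invariant (used_upto k) gs J E
    & ~ Q_used k -> forall x, used_upto k x -> Qset r x].

Lemma alg_invariant0 : alg_invariant 0.
Proof.
split; [by move=> x [j []] | by move=> /(_ (Ordinal r_gt0)) [j []] | by move=> _ x [j []]].
Qed.

Section Step.
Variables (k : nat) (lt_kn : (k < n)%N).
Local Notation i := (Ordinal lt_kn).
Hypothesis inv : alg_invariant k.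

Lemma alg_invariant_reuse : used_upto k (X i) -> alg_invariant k.+1.
Proof.
move=> used_Xi; rewrite /alg_invariant /Q_used (_ : used_upto k.+1 = used_upto k) //.
by rewrite (used_uptoS X lt_kn); apply/funext => x; apply/propext; split=> [[|->]|]; auto.
Qed.

Lemma alg_invariant_newQ (q : 'I_r) : X i = Qpt R q -> ~ used_upto k (Qpt R q) ->
  alg_invariant k.+1.
Proof.
move=> Xi unused; have [h01 _ Qsub] := inv.
have {}Qsub : forall x, used_upto k x -> Qset r x by apply: Qsub => /(_ q).
rewrite /alg_invariant /Q_used (used_uptoS X lt_kn) Xi; split.
- by move=> x [/h01 //|->]; exact: Qpt_in01.
- move=> Q_full.
  suff -> : (fun x => used_upto k x \/ x = Qpt R q) = Qset r by exact: gap_invariant_Q busy.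
  apply/funext => x; apply/propext; split=> [[/Qsub //|->]|[q' ->]]; first by exists q.
  exact: Q_full.
- by move=> _ x [/Qsub //|->]; exists q.
Qed.

Lemma alg_invariant_midpoint a b : Q_used k ->
  (forall x, used_upto k x -> occupied s d X i x) ->
  is_gap (used_upto k) a b ->
  (forall a' b', is_gap (used_upto k) a' b' -> b' - a' <= b - a) ->
  X i = (a + b) / 2 -> alg_invariant k.+1.
Proof.
move=> Q_full all_occ gab largest Xi; have [h01 /(_ Q_full)[gs [J [E gs_inv]]] _] := inv.
have size_le : exists2 t, t <= horizon d & (size gs <= load s d t)%N.
  have [s_lt_d _ _] := inst.
  exists (s i); first exact: le_trans (ltW (s_lt_d i)) (d_le_horizon d i).
  by apply: size_gaps_le_load (gaps_uniq gs_inv) _ => // [[x y]] /(gapsP gs_inv).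
rewrite /alg_invariant /Q_used (used_uptoS X lt_kn) Xi; split.
- exact: in01_add_mid.
- by move=> _; exact: gap_invariant_add_mid h01 gs_inv gab largest size_le.
- by case=> q; left; exact: Q_full.
Qed.

End Step.

Lemma alg_invariantS k (lt_kn : (k < n)%N) : alg_invariant k -> alg_invariant k.+1.
Proof.
move=> inv; have := alg (Ordinal lt_kn); rewrite /alg_step.
change (used X (Ordinal lt_kn)) with (used_upto k).
case=> [[_ [used_Xi _]]|[[_ [_ [k' [Xi unused _]]]]|[no_vac [Q_full [a [b [gab largest Xi]]]]]]].
- exact: alg_invariant_reuse.
- exact: alg_invariant_newQ Xi unused.
- apply: (alg_invariant_midpoint inv Q_full _ _ _ Xi).
  + by move=> x used_x; apply: contra_notP no_vac => not_occ; exists x.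
  + exact: (gapE X (Ordinal lt_kn) a b).1 gab.
  + by move=> a' b' /(gapE X (Ordinal lt_kn)) /largest.
Qed.

Lemma alg_invariant_all k : (k <= n)%N -> alg_invariant k.
Proof.
elim: k => [|k IH] le_kn; first exact: alg_invariant0.
exact: alg_invariantS (IH (ltnW le_kn)).
Qed.

Lemma present_distinct (i j : 'I_n) t : i != j ->
  present s d i t -> present s d j t -> X i <> X j.
Proof.
wlog lt_ji : i j / (j < i)%N.
  move=> hwlog ne pi pj; case: (ltngtP i j) => [lt_ij|lt_ji|eq_ij].
  - by apply/nesym; apply: hwlog; rewrite // eq_sym.
  - exact: hwlog.
  - by move: ne; rewrite (val_inj eq_ij) eqxx.
move=> _ /andP[si it] /andP[sj jt] Xij; have := alg i; rewrite /alg_step.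
case=> [[_ [_ not_occ]]|[[_ [_ [k' [Xi unused _]]]]|[_ [_ [a [b [[_ _ ab empty] _ Xi]]]]]]].
- by apply: not_occ; exists j; split; [exact: lt_ji | exact: le_trans si jt | rewrite Xij].
- by apply: unused; exists j; split => //; rewrite -Xij.
- by apply: (empty j lt_ji); rewrite -Xij Xi; apply/andP; split; lra.
Qed.

(* Before [Q] is used up, at most [r] points can be present at a time. *)
Lemma Q_used_all : Q_used n.
Proof.
apply: contrapT => Q_partial; have [_ _ /(_ Q_partial) Qsub] := alg_invariant_all (leqnn n).
have [t _ r_lt_load] := busy; move: r_lt_load; apply/negP; rewrite -leqNgt loadE.
have /choice[f fP] : forall j : 'I_n, exists q : 'I_r, X j = Qpt R q.
  by move=> j; apply: Qsub; exists j.
rewrite -[X in (_ <= X)%N]card_ord; apply: (@leq_card_in _ _ f) => j1 j2.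
rewrite !inE => p1 p2 f12; apply/eqP; apply: contraT => ne.
by case: (present_distinct ne p1 p2); rewrite !fP f12.
Qed.

Lemma objective_ge (delta : R) : in01 (used_upto n) ->
  (forall x y, (x = 0 \/ used_upto n x) -> (y = 1 \/ used_upto n y) -> x < y ->
     delta <= y - x) ->
  (delta%:E <= objective s d X)%E.
Proof.
move=> h01 sep; apply/ereal_infP => _ [t _ <-].
apply: le_bigmin => [|i pi]; first exact: leey.
have used_i : used_upto n (X i) by exists i.
have /andP[Xi0 Xi1] := h01 _ used_i.
rewrite le_min; apply/andP; split.
  have Xi1' : X i - 1 <= 0 by lra.
  rewrite lee_fin /dist_bd le_min subr0 (ger0_norm (ltW Xi0)) (ler0_norm Xi1') opprB.
  apply/andP; split; first by have := sep 0 _ (or_introl erefl) (or_intror used_i) Xi0; rewrite subr0.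
  exact: sep (or_intror used_i) (or_introl erefl) Xi1.
apply: le_bigmin => [|j /andP[pj ne]]; first exact: leey.
have used_j : used_upto n (X j) by exists j.
rewrite lee_fin; have [lt_ij|lt_ji|eq_ij] := ltgtP (X i) (X j).
- by rewrite distrC ger0_norm ?subr_ge0 ?(ltW lt_ij) //; exact: sep (or_intror used_i) (or_intror used_j) lt_ij.
- by rewrite ger0_norm ?subr_ge0 ?(ltW lt_ji) //; exact: sep (or_intror used_j) (or_intror used_i) lt_ji.
- by case: (present_distinct _ pi pj eq_ij); rewrite eq_sym.
Qed.

End OnlineAlgorithm.

Unset Implicit Arguments.

Theorem lemma1 (R : realType) (r : nat) (tau : 'S_r) (n : nat)
    (s d X : 'I_n -> R) :
  (0 < r)%N ->
  instance s d ->
  (exists2 t : R, t <= horizon d & (r < load s d t)%N) ->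
  alg_output tau s d X ->
  (OPT_A s d <= (2 * sigma R r)%:E * objective s d X)%E.
Proof.
move=> r_gt0 inst busy alg.
have [h01 gaps_inv _] := alg_invariant_all r_gt0 inst alg busy (leqnn n).
have [gs [J [E inv]]] := gaps_inv (Q_used_all r_gt0 inst alg busy).
have g_gt0 := max_gap_gt0 inv.
have obj_ge : ((max_gap gs / 2)%:E <= objective s d X)%E.
  apply: (objective_ge alg h01); apply: (gap_invariant_sep inv) => p p_in.
  by have := max_gap_le_double inv p_in; lra.
apply: le_trans (OPT_A_le_inv_size inv busy) _.
apply: le_trans (lee_wpmul2l _ obj_ge); last by rewrite lee_fin mulr_ge0 // ltW // sigma_gt0.
rewrite -EFinM lee_fin.
have -> : 2 * sigma R r * (max_gap gs / 2) = ((sigma R r * max_gap gs)^-1)^-1.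
  by rewrite invrK; field.
rewrite lef_pV2 ?posrE ?invr_gt0 ?mulr_gt0 ?ltr0n ?sigma_gt0 ?(gap_invariant_size_gt0 inv) //.
exact: gap_invariant_size_ge inv.
Qed.
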